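(* Let $n\ge1$, let $\chi$ be an irreducible character of $S_n$, let $1\le k\le n$ and let $A,X^1,\ldots,X^k\in M_n(\mathbb{C})$. Then $$D^k d_\chi (A)(X^1,\ldots ,X^k)= \sum_{\sigma \in S_k}\sum _{\alpha, \beta \in Q_{k,n}}d_\chi \Big(X^\sigma_{\beta}[ \alpha | \beta ] \bigoplus_{\alpha | \beta}A(\alpha|\beta)\Big),$$ and in particular, for $X\in M_n(\mathbb{C})$, $$D^k d_\chi (A)(X,\ldots ,X)= k!\sum _{\alpha, \beta \in Q_{k,n}}d_\chi \Big(X [ \alpha | \beta ] \bigoplus_{\alpha |\beta}A(\alpha|\beta)\Big).$$
   Context: $d_\chi(Y)=\sum_{\sigma\in S_n}\chi(\sigma)\prod_{i=1}^n y_{i\sigma(i)}$ for $Y=(y_{ij})\in M_n(\mathbb{C})$. $D^k d_\chi(A)(X^1,\ldots,X^k)=\frac{\partial^k}{\partial t_1\cdots\partial t_k}\big|_{t_1=\cdots=t_k=0} d_\chi(A+t_1X^1+\cdots+t_kX^k)$. $Q_{k,n}$ is the set of strictly increasing maps $\{1,\ldots,k\}\to\{1,\ldots,n\}$; for $\alpha\in Q_{k,n}$, $\bar\alpha\in Q_{n-k,n}$ is the map whose image is the complement of $\operatorname{Im}\alpha$. For $\sigma\in S_k$ and $\beta\in Q_{k,n}$, $X^\sigma_\beta$ is the $n\times n$ matrix whose $\beta(p)$-th column equals the $\beta(p)$-th column of $X^{\sigma(p)}$ for $1\le p\le k$, all other columns being zero. For an $n\times n$ matrix $Y$, $Y[\alpha|\beta]$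 is the $k\times k$ matrix with $(i,j)$ entry $y_{\alpha(i)\beta(j)}$ and $Y(\alpha|\beta)$ is the $(n-k)\times(n-k)$ matrix obtained by deleting rows $\alpha(1),\ldots,\alpha(k)$ and columns $\beta(1),\ldots,\beta(k)$. For a $k\times k$ matrix $P$ and an $(n-k)\times(n-k)$ matrix $R$, $P\bigoplus_{\alpha|\beta}R=(z_{ij})$ is the $n\times n$ matrix with $z_{ij}=0$ if exactly one of $i\in\operatorname{Im}\alpha$, $j\in\operatorname{Im}\beta$ holds; $z_{ij}=p_{\alpha^{-1}(i)\beta^{-1}(j)}$ if $i\in\operatorname{Im}\alpha,\ j\in\operatorname{Im}\beta$; $z_{ij}=r_{\bar\alpha^{-1}(i)\bar\beta^{-1}(j)}$ if $i\notin\operatorname{Im}\alpha,\ j\notin\operatorname{Im}\beta$. *)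

From HB Require Import structures.
From mathcomp Require Import all_boot all_order all_algebra all_fingroup all_field.
From mathcomp Require Import all_character.
From mathcomp Require Import mpoly.
Set Implicit Arguments. Unset Strict Implicit. Unset Printing Implicit Defensive.
Import GRing.Theory.
Local Open Scope ring_scope.

Definition gmf_chi (R : comNzRingType) (n : nat) (c : 'S_n -> R) (Y : 'M[R]_n) : R :=
  \sum_(s : 'S_n) c s * \prod_(i < n) Y i (s i).

(* Q_{k,n}: strictly increasing maps {1..k} -> {1..n} (0-based ordinals). *)
Definition incr (k n : nat) (a : {ffun 'I_k -> 'I_n}) : bool :=
  [forall i : 'I_k, forall j : 'I_k, (i < j)%N ==> (a i < a j)%N].

(* abar : the increasing map 'I_(n-k) -> 'I_n whose image is the complement of
   Im a (the increasing enumeration of the complement). *)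
Definition compl_map (k n : nat) (a : {ffun 'I_k -> 'I_n}) (p : 'I_(n - k)) : 'I_n :=
  nth (widen_ord (leq_subr k n) p) (enum [set j : 'I_n | j \notin codom a]) p.

Definition submx_in (R : Type) (k n : nat) (Y : 'M[R]_n)
    (a b : {ffun 'I_k -> 'I_n}) : 'M[R]_k :=
  \matrix_(i < k, j < k) Y (a i) (b j).

Definition submx_out (R : Type) (k n : nat) (Y : 'M[R]_n)
    (a b : {ffun 'I_k -> 'I_n}) : 'M[R]_(n - k) :=
  \matrix_(i < n - k, j < n - k) Y (compl_map a i) (compl_map b j).

Definition dsum_ab (R : comNzRingType) (k n : nat) (a b : {ffun 'I_k -> 'I_n})
    (P : 'M[R]_k) (Q : 'M[R]_(n - k)) : 'M[R]_n :=
  \matrix_(i < n, j < n)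
    if [pick p | a p == i] is Some p then
      (if [pick q | b q == j] is Some q then P p q else 0)
    else
      (if [pick q | b q == j] is Some _ then 0
       else if [pick p | compl_map a p == i] is Some p then
              (if [pick q | compl_map b q == j] is Some q then Q p q else 0)
            else 0).

Definition Xsig (R : comNzRingType) (k n : nat) (X : 'I_k -> 'M[R]_n)
    (s : 'S_k) (b : {ffun 'I_k -> 'I_n}) : 'M[R]_n :=
  \matrix_(i < n, j < n)
    if [pick p | b p == j] is Some p then X (s p) i j else 0.

(* D^k d_c(A)(X^1,...,X^k): the mixed partial derivative d^k/dt_1...dt_k at t = 0 of the
   polynomial t |-> d_c(A + t_1 X^1 + ... + t_k X^k), computed formally in {mpoly R[k]}. *)
Definition Dk_dchi (R : comNzRingType) (n k : nat) (c : 'S_n -> R)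
    (A : 'M[R]_n) (X : 'I_k -> 'M[R]_n) : R :=
  let M : 'M[{mpoly R[k]}]_n :=
    \matrix_(i < n, j < n) ((A i j)%:MP + \sum_(p < k) 'X_p * (X p i j)%:MP) in
  let P := gmf_chi (fun s => (c s)%:MP) M in
  (foldr (fun p q => mderiv p q) P (enum 'I_k)).@[fun _ => 0].

(* Expanding d_chi (A + t_1 X^1 + ... + t_k X^k), the mixed derivative at t = 0 is the
   coefficient of t_1 ... t_k: the sum over sigma in S_n and over injections r : [k] -> [n]
   of chi(sigma) times the diagonal product along sigma whose row r(p) is taken from X^p and
   whose other rows come from A.  Each injection is an increasing alpha followed by a
   reordering of [k].  Conversely, for fixed alpha and sigma, the product along sigma of
   X^tau_beta[alpha|beta] (+) A(alpha|beta) vanishes unless Im beta = sigma(Im alpha), and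
   for that beta the permutations tau run through all reorderings of the rows Im alpha.
   With X^p = X for all p the k! permutations give equal terms. *)

From HB Require Import structures.
From mathcomp Require Import all_boot all_order all_algebra all_fingroup all_field.
From mathcomp Require Import all_character.
From mathcomp Require Import mpoly.
Set Implicit Arguments. Unset Strict Implicit. Unset Printing Implicit Defensive.
Import Order.POrderTheory GRing.Theory.
Local Open Scope ring_scope.

Section Pick.
Variables (I : finType) (T : eqType) (f : I -> T).

Lemma pick_inj_eq p : injective f -> [pick q | f q == f p] = Some p.
Proof. by move=> f_inj; case: pickP => [q /eqP /f_inj -> //|/(_ p)]; rewrite eqxx. Qed.

Lemma pick_notin_codom y : y \notin codom f -> [pick q | f q == y] = None.
Proof. by move=> yNf; case: pickP => [p /eqP fp|//]; rewrite -fp codom_f in yNf. Qed.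

Lemma notin_codom_neq y : (forall q, (f q == y) = false) -> y \notin codom f.
Proof. by move=> fy; apply/codomP => -[p yp]; have := fy p; rewrite yp eqxx. Qed.

Lemma perm_of_codom_sub (g : I -> T) : injective f -> injective g ->
  (forall p, g p \in codom f) -> exists s : {perm I}, forall p, f (s p) = g p.
Proof.
move=> f_inj g_inj g_f.
pose h p := odflt p [pick q | f q == g p].
have fh p : f (h p) = g p.
  rewrite /h; case: pickP => [q /eqP //|].
  by move/codomP: (g_f p) => [q ->] /(_ q); rewrite eqxx.
have h_inj : injective h by move=> p1 p2 e; apply: g_inj; rewrite -!fh e.
by exists (perm h_inj) => p; rewrite permE fh.
Qed.

End Pick.

Lemma sorted_enum_ord m : sorted <%O (enum 'I_m).
Proof. by have := iota_ltn_sorted 0 m; rewrite -val_enum_ord sorted_map. Qed.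

Section IncreasingMaps.
Variables (k n : nat).
Implicit Types (a b : {ffun 'I_k -> 'I_n}).

Lemma incr_inj a : incr a -> injective a.
Proof.
move=> /forallP a_incr i j aij; apply/ord_inj.
case: (ltngtP i j) => // ij.
- by have := forallP (a_incr i) j; rewrite ij /= aij ltnn.
- by have := forallP (a_incr j) i; rewrite ij /= aij ltnn.
Qed.

Lemma sorted_codom_incr a : incr a -> sorted <%O (codom a).
Proof.
move=> /forallP a_incr; rewrite codomE sorted_map.
apply: sub_sorted (sorted_enum_ord k) => i j ij.
exact: implyP (forallP (a_incr i) j) ij.
Qed.

Lemma incr_codom_inj a b : incr a -> incr b -> codom a =i codom b -> a = b.
Proof.
move=> a_incr b_incr ab.
have := irr_sorted_eq (@lt_trans _ _) (@ltxx _ _)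
  (sorted_codom_incr a_incr) (sorted_codom_incr b_incr) ab.
rewrite !codomE => E; apply/ffunP => p.
have p_enum : (index p (enum 'I_k) < size (enum 'I_k))%N by rewrite index_mem mem_enum.
have := congr1 (fun s => nth (a p) s (index p (enum 'I_k))) E.
by rewrite !(nth_map p) -?enumT // nth_index ?mem_enum.
Qed.

Lemma incr_of_card (S : {set 'I_n}) : #|S| = k ->
  exists2 a : {ffun 'I_k -> 'I_n}, incr a & codom a =i S.
Proof.
move=> cardS; pose e (p : 'I_k) := enum_val (cast_ord (esym cardS) p).
have S_sorted : sorted <%O (enum S).
  by rewrite /enum_mem -enumT; apply: sorted_filter (sorted_enum_ord n) => //; apply: lt_trans.
exists [ffun p => e p].
  apply/forallP => i; apply/forallP => j; apply/implyP => ij; rewrite !ffunE /e.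
  rewrite !(enum_val_nth (e i)).
  by apply: (sorted_ltn_nth (@lt_trans _ _) _ S_sorted) => //; rewrite inE -cardE ltn_ord.
move=> y; apply/codomP/idP => [[p ->]|yS]; first by rewrite ffunE enum_valP.
exists (cast_ord cardS (enum_rank_in yS y)); rewrite ffunE /e cast_ordK.
by rewrite enum_rankK_in.
Qed.

End IncreasingMaps.

Section InjectiveMaps.
Variables (k n : nat).
Implicit Types (a r : {ffun 'I_k -> 'I_n}).

Definition ffun_perm a (s : 'S_k) : {ffun 'I_k -> 'I_n} := [ffun p => a (s p)].

Lemma codom_ffun_perm a s : codom (ffun_perm a s) =i codom a.
Proof.
move=> y; apply/codomP/codomP => [[p ->]|[q ->]]; first by exists (s p); rewrite ffunE.
by exists (s^-1 q)%g; rewrite ffunE permKV.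
Qed.

Lemma ffun_perm_inj a s : incr a -> injective (ffun_perm a s).
Proof. by move=> a_incr p q; rewrite !ffunE => /(incr_inj a_incr) /perm_inj. Qed.

Lemma sum_injective_ffun (V : nmodType) (G : {ffun 'I_k -> 'I_n} -> V) :
  \sum_(r : {ffun 'I_k -> 'I_n} | injectiveb r) G r =
  \sum_(a : {ffun 'I_k -> 'I_n} | incr a) \sum_(s : 'S_k) G (ffun_perm a s).
Proof.
rewrite pair_big_dep /=.
pose h (x : {ffun 'I_k -> 'I_n} * 'S_k) := ffun_perm x.1 x.2.
pose D := [set x : {ffun 'I_k -> 'I_n} * 'S_k | incr x.1].
rewrite (eq_bigl (mem D)); last by move=> x; rewrite !inE andbT.
have h_inj : {in D &, injective h}.
  move=> [a s] [b t]; rewrite !inE /= /h => a_incr b_incr e.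
  have eab : a = b.
    apply: (incr_codom_inj a_incr b_incr) => y.
    by rewrite -(codom_ffun_perm a s) -(codom_ffun_perm b t) e.
  subst b; congr (_, _); apply/permP => p.
  by have := congr1 (fun f : {ffun 'I_k -> 'I_n} => f p) e; rewrite /= !ffunE => /(incr_inj a_incr).
rewrite -(big_imset _ h_inj) /=; apply: eq_bigl => r; apply/idP/imsetP.
  move/injectiveP => r_inj.
  have card_r : #|[set y | y \in codom r]| = k by rewrite cardsE (card_codom r_inj) card_ord.
  have [a a_incr a_r] := incr_of_card card_r.
  have [s a_s] : exists s : 'S_k, forall p, a (s p) = r p.
    by apply: perm_of_codom_sub (incr_inj a_incr) r_inj _ => p; rewrite a_r inE codom_f.
  by exists (a, s); rewrite ?inE //; apply/ffunP => p; rewrite /h ffunE a_s.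
by move=> [[a s]]; rewrite inE /= /h => a_incr ->; apply/injectiveP/ffun_perm_inj.
Qed.

End InjectiveMaps.

Section Complement.
Variables (k n : nat).
Implicit Types (a : {ffun 'I_k -> 'I_n}).

Lemma card_compl_codom a : incr a -> #|[set j : 'I_n | j \notin codom a]| = (n - k)%N.
Proof.
move=> a_incr.
have card_a : #|mem (codom a)| = k by rewrite (card_codom (incr_inj a_incr)) card_ord.
have := cardC (mem (codom a)); rewrite card_ord card_a => card_n.
by rewrite -[X in (X - k)%N]card_n addKn; apply: eq_card => j; rewrite !inE.
Qed.

Lemma compl_map_surj a (j : 'I_n) : incr a -> j \notin codom a -> exists p, compl_map a p = j.
Proof.
move=> a_incr ja.
have j_compl : j \in enum [set j : 'I_n | j \notin codom a] by rewrite mem_enum inE.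
have j_idx : (index j (enum [set j : 'I_n | j \notin codom a]) < n - k)%N.
  by rewrite -(card_compl_codom a_incr) cardE index_mem.
by exists (Ordinal j_idx); rewrite /compl_map /= nth_index.
Qed.

End Complement.

Lemma big_option (V : nmodType) (J : finType) (F : option J -> V) :
  \sum_(o : option J) F o = F None + \sum_(j : J) F (Some j).
Proof.
rewrite /index_enum !unlock /=; congr (_ + _); rewrite Finite.enum.unlock.
by elim: (isFinite.enum_subdef _) => //= x s ->.
Qed.

Definition choice_mnm (k n : nat) (f : {ffun 'I_n -> option 'I_k}) : 'X_{1..k} :=
  \big[+%MM/0%MM]_(i < n) (if f i is Some p then U_(p) else 0)%MM.

Section Polynomials.
Variables (R : comNzRingType) (k : nat).

Lemma meval_at0 (p : {mpoly R[k]}) : p.@[fun _ => 0] = p@_0.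
Proof.
rewrite mevalE [in RHS](mpolyE p) raddf_sum /=; apply: eq_bigr => m _.
rewrite mcoeffZ mcoeffX; congr (_ * _).
have [->|m_nz] := eqVneq m 0%MM; first by apply: big1 => i _; rewrite mnm0E expr0.
have [i mi] : exists i, m i != 0%N.
  apply/existsP; apply: contraR m_nz; rewrite negb_exists => /forallP m0.
  by apply/eqP/mnmP => i; rewrite mnm0E; apply/eqP; rewrite -[_ == _]negbK m0.
by rewrite (bigD1 i) //= expr0n (negbTE mi) mul0r.
Qed.

Lemma mcoeff_mderiv_seq (p : {mpoly R[k]}) (s : seq 'I_k) (m : 'X_{1..k}) :
  uniq s -> (forall i, i \in s -> m i = 0%N) ->
  (foldr (fun i q => mderiv i q) p s)@_m = p@_(m + \big[+%MM/0%MM]_(i <- s) U_(i))%MM.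
Proof.
elim: s m => [|x s IHs] m /=; first by rewrite big_nil addm0.
move=> /andP [xNs s_uniq] m_s.
rewrite mcoeff_mderiv m_s ?mem_head // IHs //; first by rewrite big_cons addmA.
move=> i i_s; rewrite mnmDE mnm1E m_s ?in_cons ?i_s ?orbT //.
by case: eqP i_s xNs => // -> ->.
Qed.

Lemma prod_scale_mpolyX (I : finType) (c : I -> R) (m : I -> 'X_{1..k}) :
  \prod_i (c i *: 'X_[m i]) = (\prod_i c i) *: ('X_[\big[+%MM/0%MM]_i m i] : {mpoly R[k]}).
Proof.
rewrite scaler_prod; congr (_ *: _).
by elim/big_rec2: _ => [|i x _ _ ->]; rewrite ?mpolyX0 ?mpolyXD.
Qed.

Lemma prod_affine_expand (n : nat) (a : 'I_n -> R) (x : 'I_n -> 'I_k -> R) :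
  \prod_(i < n) ((a i)%:MP + \sum_(p < k) 'X_p * (x i p)%:MP) =
  \sum_(f : {ffun 'I_n -> option 'I_k})
     (\prod_(i < n) (if f i is Some p then x i p else a i)) *:
       ('X_[choice_mnm f] : {mpoly R[k]}).
Proof.
have affineE i : (a i)%:MP + \sum_(p < k) 'X_p * (x i p)%:MP =
   \sum_(o : option 'I_k) ((if o is Some p then x i p else a i) *:
        ('X_[if o is Some p then U_(p) else 0%MM] : {mpoly R[k]})).
  rewrite big_option /= mpolyX0 -mul_mpolyC mulr1; congr (_ + _).
  by apply: eq_bigr => p _; rewrite mulrC mul_mpolyC.
rewrite (eq_bigr _ (fun i _ => affineE i)) bigA_distr_bigA /=.
by apply: eq_bigr => f _; rewrite prod_scale_mpolyX.
Qed.

End Polynomials.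

Definition ffun_pinv (k n : nat) (r : {ffun 'I_k -> 'I_n}) : {ffun 'I_n -> option 'I_k} :=
  [ffun i => [pick p | r p == i]].

Definition mnm_ones (k : nat) : 'X_{1..k} := (\big[+%MM/0%MM]_(i <- enum 'I_k) U_(i))%MM.

Section Choices.
Variables (k n : nat).
Implicit Types (f : {ffun 'I_n -> option 'I_k}) (r : {ffun 'I_k -> 'I_n}).

Lemma mnm_onesE (p : 'I_k) : mnm_ones k p = 1%N.
Proof.
rewrite /mnm_ones mnm_sumE big_enum /= (bigD1 p) //= mnm1E eqxx big1 //.
by move=> j /negbTE jp; rewrite mnm1E jp.
Qed.

Lemma choice_mnmE f p : choice_mnm f p = #|[pred i | f i == Some p]|.
Proof.
rewrite /choice_mnm mnm_sumE -sum1_card [RHS]big_mkcond /=.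
by apply: eq_bigr => i _; rewrite inE; case: (f i) => [q|] //=; rewrite ?mnm0E ?mnm1E.
Qed.

Lemma choice_mnm_onesP f :
  reflect (forall p, #|[pred i | f i == Some p]| = 1%N) (choice_mnm f == mnm_ones k).
Proof.
apply: (iffP eqP) => [fE p|f1]; last by apply/mnmP => p; rewrite choice_mnmE mnm_onesE.
by have := congr1 (fun m : 'X_{1..k} => m p) fE; rewrite /= choice_mnmE mnm_onesE.
Qed.

Lemma ffun_pinvE r i p : injective r -> (ffun_pinv r i == Some p) = (r p == i).
Proof.
move=> r_inj; rewrite ffunE; have [<-|rpi] := eqVneq (r p) i; first by rewrite pick_inj_eq ?eqxx.
by case: pickP => [q /eqP rq|//]; apply/eqP => -[qp]; rewrite -qp rq eqxx in rpi.
Qed.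

Lemma ffun_pinv_inj : {in [set r : {ffun 'I_k -> 'I_n} | injectiveb r] &, injective (@ffun_pinv k n)}.
Proof.
move=> r1 r2; rewrite !inE => /injectiveP r1_inj /injectiveP r2_inj r12.
by apply/ffunP => p; apply/eqP; rewrite -(ffun_pinvE (r2 p) p r1_inj) r12 ffun_pinvE.
Qed.

Lemma ffun_pinv_image f :
  (f \in (@ffun_pinv k n) @: [set r : {ffun 'I_k -> 'I_n} | injectiveb r]) =
  (choice_mnm f == mnm_ones k).
Proof.
apply/imsetP/choice_mnm_onesP => [[r] |f1].
  rewrite inE => /injectiveP r_inj -> p.
  by apply: (eq_card1 (x := r p)) => i; rewrite inE /= ffun_pinvE // eq_sym.
have /fin_all_exists [r0 r0E] p : exists x, [pred i | f i == Some p] =i pred1 x.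
  by apply/card1P; rewrite f1.
pose r := [ffun p => r0 p].
have fE i p : (f i == Some p) = (i == r p) by rewrite ffunE; apply: r0E.
have fr p : f (r p) = Some p by apply/eqP; rewrite fE.
have r_inj : injective r by move=> p1 p2 e; have := fr p1; rewrite e fr => -[].
exists r; first by rewrite inE; apply/injectiveP.
apply/ffunP => i; rewrite ffunE; case fi: (f i) => [p|].
  have /eqP -> : i == r p by rewrite -fE fi.
  by rewrite pick_inj_eq.
by case: pickP => [p /eqP rp|//]; rewrite -rp fr in fi.
Qed.

End Choices.

Section Expansion.
Variables (R : comNzRingType) (k n : nat) (A : 'M[R]_n) (X : 'I_k -> 'M[R]_n).
Implicit Types (a b : {ffun 'I_k -> 'I_n}).

Definition choice_term (s : 'S_n) (f : {ffun 'I_n -> option 'I_k}) : R :=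
  \prod_(i < n) (if f i is Some p then X p i (s i) else A i (s i)).

Lemma Dk_dchi_expand (c : 'S_n -> R) : Dk_dchi c A X =
  \sum_(s : 'S_n) c s * \sum_(r : {ffun 'I_k -> 'I_n} | injectiveb r) choice_term s (ffun_pinv r).
Proof.
rewrite /Dk_dchi meval_at0 mcoeff_mderiv_seq ?enum_uniq //; last by move=> i _; rewrite mnm0E.
rewrite add0m /gmf_chi raddf_sum /=; apply: eq_bigr => s _; rewrite mcoeffCM; congr (_ * _).
rewrite (eq_bigr (fun i => (A i (s i))%:MP + \sum_(p < k) 'X_p * (X p i (s i))%:MP));
  last by move=> i _; rewrite mxE.
rewrite prod_affine_expand raddf_sum /=.
under eq_bigr do rewrite mcoeffZ mcoeffX.
transitivity (\sum_(f | choice_mnm f == mnm_ones k) choice_term s f).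
  by rewrite [RHS]big_mkcond; apply: eq_bigr => f _; case: eqP; rewrite ?mulr1 ?mulr0.
rewrite (eq_bigl (mem ((@ffun_pinv k n) @: [set r : {ffun 'I_k -> 'I_n} | injectiveb r]))); last first.
  by move=> f; rewrite /= -ffun_pinv_image.
by rewrite big_imset /=; [apply: eq_bigl => r; rewrite inE | apply: ffun_pinv_inj].
Qed.

Definition mixed_mx (t : 'S_k) a b : 'M[R]_n :=
  dsum_ab a b (submx_in (Xsig X t b) a b) (submx_out A a b).

Lemma mixed_mxE t a b (i j : 'I_n) : incr a -> incr b ->
  mixed_mx t a b i j =
    match [pick p | a p == i], [pick q | b q == j] with
    | Some _, Some q => X (t q) i j
    | None, None => A i j
    | _, _ => 0
    end.
Proof.
move=> a_incr b_incr; rewrite /mixed_mx /dsum_ab mxE.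
case: pickP => [p /eqP ap|ai]; case: pickP => [q /eqP bq|bj] //.
  by rewrite !mxE pick_inj_eq ?ap ?bq //; apply: incr_inj.
case: pickP => [p' /eqP ap'|a'i]; last first.
  by have [p' ap'] := compl_map_surj a_incr (notin_codom_neq ai); have := a'i p'; rewrite ap' eqxx.
case: pickP => [q' /eqP bq'|b'j]; first by rewrite mxE ap' bq'.
by have [q' bq'] := compl_map_surj b_incr (notin_codom_neq bj); have := b'j q'; rewrite bq' eqxx.
Qed.


Lemma prod_mixed_mx_eq0 (s : 'S_n) t a b : incr a -> incr b ->
  [exists i, (i \in codom a) != (s i \in codom b)] ->
  \prod_(i < n) mixed_mx t a b i (s i) = 0.
Proof.
move=> a_incr b_incr /existsP [i abi]; rewrite (bigD1 i) //= mixed_mxE //.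
case: pickP => [p /eqP ap|ai]; case: pickP => [q /eqP bq|bi] /=; rewrite ?mul0r //.
  by rewrite -bq -ap !codom_f in abi.
by rewrite (negbTE (notin_codom_neq ai)) (negbTE (notin_codom_neq bi)) in abi.
Qed.

Lemma prod_mixed_mx_match (s : 'S_n) t a b (rho : 'S_k) : incr a -> incr b ->
  (forall q, b (rho q) = s (a q)) ->
  \prod_(i < n) mixed_mx t a b i (s i) =
    choice_term s (ffun_pinv (ffun_perm a (rho * t)^-1)).
Proof.
move=> a_incr b_incr b_rho; rewrite /choice_term; apply: eq_bigr => i _.
rewrite mixed_mxE //; case: pickP => [p /eqP ap|ai].
  have -> : [pick q | b q == s i] = Some (rho p).
    by rewrite -ap -b_rho pick_inj_eq //; apply: incr_inj.
  suff -> : ffun_pinv (ffun_perm a (rho * t)^-1) i = Some (t (rho p)) by []; apply/eqP.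
  rewrite ffun_pinvE ?ffunE; last exact: ffun_perm_inj.
  by rewrite -(permM rho t p) permK ap.
have iNa := notin_codom_neq ai.
rewrite pick_notin_codom; last first.
  apply/codomP => -[q]; rewrite -(permKV rho q) b_rho => /perm_inj ia.
  by rewrite ia codom_f in iNa.
by rewrite ffunE pick_notin_codom // codom_ffun_perm.
Qed.

(* Only the increasing [b] enumerating [s (Im a)] contributes; reordering it against [a]
   turns the sum over [t] into the sum over all orderings [u] of the rows [Im a]. *)
Lemma sum_prod_mixed_mx (s : 'S_n) a : incr a ->
  \sum_(t : 'S_k) \sum_(b : {ffun 'I_k -> 'I_n} | incr b) \prod_(i < n) mixed_mx t a b i (s i)
  = \sum_(u : 'S_k) choice_term s (ffun_pinv (ffun_perm a u)).
Proof.
move=> a_incr.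
have card_sa : #|[set s y | y in codom a]| = k.
  by rewrite card_imset ?(card_codom (incr_inj a_incr)) ?card_ord //; apply: perm_inj.
have [b0 b0_incr b0E] := incr_of_card card_sa.
have codom_b0 i : (s i \in codom b0) = (i \in codom a).
  by rewrite b0E mem_imset //; apply: perm_inj.
have other_b t b : incr b -> b != b0 -> \prod_(i < n) mixed_mx t a b i (s i) = 0.
  move=> b_incr b_b0; apply: prod_mixed_mx_eq0 => //.
  apply: contraNT b_b0 => /existsPn same; apply/eqP/(incr_codom_inj b_incr b0_incr) => y.
  by rewrite -(permKV s y) codom_b0; apply/esym/eqP/negPn/same.
rewrite (eq_bigr (fun t => \prod_(i < n) mixed_mx t a b0 i (s i))); last first.
  move=> t _; rewrite (bigD1 b0) //= [X in _ + X]big1 ?addr0 // => b /andP [b_incr b_b0].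
  exact: other_b.
have [rho b0_rho] : exists rho : 'S_k, forall q, b0 (rho q) = s (a q).
  apply: perm_of_codom_sub (incr_inj b0_incr) _ _ => [p q /perm_inj /(incr_inj a_incr)//|q].
  by rewrite codom_b0 codom_f.
rewrite [RHS](reindex_inj (inj_comp (@invg_inj _) (mulgI rho))) /=.
by apply: eq_bigr => t _; rewrite (prod_mixed_mx_match _ _ b0_incr b0_rho).
Qed.

Lemma Dk_dchi_mixed (c : 'S_n -> R) : Dk_dchi c A X =
  \sum_(t : 'S_k) \sum_(a : {ffun 'I_k -> 'I_n} | incr a)
     \sum_(b : {ffun 'I_k -> 'I_n} | incr b) gmf_chi c (mixed_mx t a b).
Proof.
rewrite Dk_dchi_expand.
transitivity (\sum_(s : 'S_n) c s * \sum_(a : {ffun 'I_k -> 'I_n} | incr a) \sum_(t : 'S_k)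
   \sum_(b : {ffun 'I_k -> 'I_n} | incr b) \prod_(i < n) mixed_mx t a b i (s i)).
  apply: eq_bigr => s _; congr (_ * _); rewrite sum_injective_ffun.
  by apply: eq_bigr => a a_incr; rewrite sum_prod_mixed_mx.
rewrite /gmf_chi; symmetry.
under eq_bigr => t _ do under eq_bigr => a _ do rewrite exchange_big.
under eq_bigr => t _ do rewrite exchange_big.
rewrite exchange_big; under eq_bigr => s _ do rewrite exchange_big.
apply: eq_bigr => s _; rewrite big_distrr; apply: eq_bigr => a _.
by rewrite big_distrr; apply: eq_bigr => t _; rewrite big_distrr.
Qed.

End Expansion.

Lemma submx_in_Xsig_const (R : comNzRingType) (k n : nat) (Y : 'M[R]_n) (t : 'S_k)
    (a b : {ffun 'I_k -> 'I_n}) :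
  submx_in (Xsig (fun=> Y) t b) a b = submx_in Y a b.
Proof.
by apply/matrixP => p q; rewrite !mxE; case: pickP => [//|/(_ q)]; rewrite eqxx.
Qed.

Theorem mainTheorem6 (L : numClosedFieldType) (phi : {rmorphism algC -> L})
    (n : nat) (i : Iirr [set: 'S_n]%G) (k : nat)
    (hn : (1 <= n)%N) (hk1 : (1 <= k)%N) (hkn : (k <= n)%N)
    (A : 'M[L]_n) (X : 'I_k -> 'M[L]_n) (Y : 'M[L]_n) :
  let c : 'S_n -> L := fun s => phi ('chi[[set: 'S_n]%G]_i s) in
  Dk_dchi c A X =
    \sum_(s : 'S_k) \sum_(a : {ffun 'I_k -> 'I_n} | incr a)
       \sum_(b : {ffun 'I_k -> 'I_n} | incr b)
         gmf_chi c (dsum_ab a b (submx_in (Xsig X s b) a b) (submx_out A a b))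
  /\
  Dk_dchi c A (fun _ : 'I_k => Y) =
    (k`!)%:R * \sum_(a : {ffun 'I_k -> 'I_n} | incr a)
       \sum_(b : {ffun 'I_k -> 'I_n} | incr b)
         gmf_chi c (dsum_ab a b (submx_in Y a b) (submx_out A a b)).
Proof.
move=> c; split; first exact: Dk_dchi_mixed.
rewrite Dk_dchi_mixed /mixed_mx.
under eq_bigr do under eq_bigr do under eq_bigr do rewrite submx_in_Xsig_const.
by rewrite sumr_const card_Sn mulr_natl.
Qed.
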